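(* With the notation of the context, as formal power series in the two variables $x$ and $q$, $$\sum_{\lambda\in\mathcal{D}}(-1)^{n_\lambda}x^{m_\lambda+n_\lambda}q^{N_\lambda} =1+\sum_{r=1}^\infty(-1)^r\Big[x^{3r-1}q^{r(3r-1)/2}+x^{3r}q^{r(3r+1)/2}\Big].$$
   Context: $\mathcal{D}$ denotes the set of all partitions into distinct parts (of all nonnegative integers, including the empty partition of $0$). For $\lambda\in\mathcal{D}$, $N_\lambda$ is the integer partitioned by $\lambda$, $n_\lambda$ is the number of parts of $\lambda$, and $m_\lambda$ is the largest part of $\lambda$ (with $m_\lambda=0$ for the empty partition). *)

From mathcomp Require Import all_boot all_order all_algebra.
Set Implicit Arguments. Unset Strict Implicit. Unset Printing Implicit Defensive.
Import GRing.Theory Num.Theory.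

(* A partition into distinct parts is a finite set of positive integers (its
   parts).  A distinct partition lambda of N has all parts in {1,...,N}, so the
   distinct partitions of N are exactly the sets S : {set 'I_N.+1} with
   0 \notin S and sum of elements = N. *)

Definition n_part (N : nat) (S : {set 'I_N.+1}) : nat := #|S|.
(* m_lambda : largest part (0 for the empty partition) *)
Definition m_part (N : nat) (S : {set 'I_N.+1}) : nat := \max_(i in S) (i : nat).
Definition N_part (N : nat) (S : {set 'I_N.+1}) : nat := \sum_(i in S) (i : nat).

Definition is_distinct_partition_of (N : nat) (S : {set 'I_N.+1}) : bool :=
  (ord0 \notin S) && (N_part S == N).

Local Open Scope ring_scope.

(* Coefficient of x^a q^N in  sum_{lambda in D} (-1)^{n} x^{m+n} q^{N_lambda}. *)
Definition lhs_coef (a N : nat) : int :=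
  \sum_(S : {set 'I_N.+1} | is_distinct_partition_of S && (m_part S + n_part S == a)%N)
     (-1) ^+ n_part S.

(* Coefficient of x^a q^N in
   1 + sum_{r>=1} (-1)^r [x^{3r-1} q^{r(3r-1)/2} + x^{3r} q^{r(3r+1)/2}].
   Only r with r(3r-1)/2 <= N, hence r <= N, can contribute, so the sum over
   r is truncated at N. *)
Definition rhs_coef (a N : nat) : int :=
  ((a == 0%N) && (N == 0%N))%:R
  + \sum_(1 <= r < N.+1)
      (-1) ^+ r * ( (((a == 3 * r - 1)%N) && (N == r * (3 * r - 1) %/ 2)%N)%:R
                  + (((a == 3 * r)%N) && (N == r * (3 * r + 1) %/ 2)%N)%:R ).

From mathcomp Require Import all_boot all_order all_algebra.
From mathcomp Require Import zify.
Set Implicit Arguments. Unset Strict Implicit. Unset Printing Implicit Defensive.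
Import GRing.Theory Num.Theory.

(* For a partition into distinct parts with smallest
   part s, largest part m and slope k (the run m, m-1, ..., m-k+1 of parts),
   either move the smallest part onto the slope (s <= k: remove s, add 1 to
   the s largest parts) or move the slope off into a new smallest part
   (k < s: subtract 1 from the slope, add a part k).  The number n of parts
   changes by one and m in the opposite direction, so N and m + n are kept
   while (-1)^n flips; the two moves are mutually inverse.  The move is
   impossible exactly on the pentagonal partitions {k, ..., 2k-1} and
   {k+1, ..., 2k}, which have m + n = 3k-1 resp. 3k and N = k(3k-1)/2 resp.
   k(3k+1)/2, and they account for the right-hand side. *)

Fixpoint top_run (P : pred nat) (m : nat) : nat :=
  if m is m'.+1 then (if P m then (top_run P m').+1 else 0) else 0.

Section TopRun.
Variable P : pred nat.

Lemma top_run_leq m : top_run P m <= m.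
Proof. by elim: m => //= m IH; case: (P _). Qed.

Lemma top_run_mem m j : j < top_run P m -> P (m - j).
Proof.
elim: m j => //= m IH [|j]; case: (P _) => //= lt_j.
by rewrite subSS; apply: IH.
Qed.

Lemma top_run_gap m : top_run P m < m -> ~~ P (m - top_run P m).
Proof.
elim: m => //= m IH; case Pm: (P _) => /=; last by rewrite subn0 Pm.
by rewrite ltnS subSS => /IH.
Qed.

Lemma top_run_geq m k :
  k <= m -> (forall j, j < k -> P (m - j)) -> k <= top_run P m.
Proof.
move=> le_km Pk; case: (leqP k (top_run P m)) => // lt_run.
by have := top_run_gap (leq_trans lt_run le_km); rewrite Pk.
Qed.

Lemma top_run_leq_gap m k : ~~ P (m - k) -> top_run P m <= k.
Proof.
move=> nPk; case: (leqP (top_run P m) k) => // lt_k.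
by move: (top_run_mem lt_k); rewrite (negbTE nPk).
Qed.

End TopRun.

Section SignReversing.
Local Open Scope ring_scope.

Lemma sumr_sign_reversing (R : numDomainType) (I : finType) (P : pred I)
    (f : I -> I) (F : I -> R) :
  (forall i, P i -> [/\ P (f i), f (f i) = i & F (f i) = - F i]) ->
  \sum_(i | P i) F i = 0.
Proof.
move=> f_rev; suff x_opp : \sum_(i | P i) F i = - \sum_(i | P i) F i.
  by apply/eqP; rewrite -[_ == 0]/(false || _) -(mulrn_eq0 _ 2) mulr2n {2}x_opp subrr.
rewrite {1}(reindex_onto f f) => [|i /f_rev[] //].
rewrite -sumrN; apply: eq_big => [i | i /andP[Pfi /eqP ffi]].
  apply/andP/idP => [[Pfi /eqP ffi] | Pi]; last by case: (f_rev _ Pi) => -> ->.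
  by rewrite -ffi; case: (f_rev _ Pfi).
by have [_ _ Ffi] := f_rev _ Pfi; rewrite -[in RHS]ffi Ffi opprK.
Qed.

End SignReversing.

Section Parts.
Variable N : nat.
Local Notation T := {set 'I_N.+1}.

(* Parts are handled as natural numbers; the guard is needed because [inord]
   wraps out-of-range values. *)
Definition has_part (S : T) (i : nat) := (i <= N) && (inord i \in S).

Lemma has_partE S (x : 'I_N.+1) : has_part S x = (x \in S).
Proof. by rewrite /has_part -ltnS ltn_ord inord_val. Qed.

Lemma has_part0 S : has_part S 0 = (ord0 \in S).
Proof. by rewrite -[0]/(nat_of_ord (@ord0 N)) has_partE. Qed.

Lemma has_part_leq S i : has_part S i -> i <= N.
Proof. by case/andP. Qed.

Lemma has_part_neq0 S i : has_part S i -> S != set0.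
Proof. by case/andP=> _ Si; apply/set0Pn; exists (inord i). Qed.

Lemma has_part_inj (A B : T) : has_part A =1 has_part B -> A = B.
Proof. by move=> eqAB; apply/setP => x; rewrite -!has_partE. Qed.

Lemma has_partU1 (A : T) u i : u <= N ->
  has_part (inord u |: A) i = (i == u) || has_part A i.
Proof.
move=> le_uN; rewrite /has_part; case: (leqP i N) => [le_iN|lt_Ni] /=.
  by rewrite in_setU1 -(inj_eq val_inj) /= !inordK.
by case: eqP => // eq_iu; move: lt_Ni; rewrite eq_iu ltnNge le_uN.
Qed.

Lemma has_partD1 (A : T) u i : u <= N ->
  has_part (A :\ inord u) i = (i != u) && has_part A i.
Proof.
move=> le_uN; rewrite /has_part; case: (leqP i N) => [le_iN|_] /=.
  by rewrite in_setD1 -(inj_eq val_inj) /= !inordK.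
by rewrite andbF.
Qed.

(* Like [m_part], this is 0 on the empty partition. *)
Definition min_part (S : T) : nat :=
  if [pick x in S] is Some x then val [arg min_(i < x in S) (i : nat)] else 0.

Lemma min_part_leq S i : has_part S i -> min_part S <= i.
Proof.
case/andP=> le_iN Si; rewrite /min_part; case: pickP => [x Sx|/(_ (inord i))].
  by case: arg_minnP => // y _ /(_ _ Si); rewrite inordK.
by rewrite Si.
Qed.

Lemma has_min_part S : S != set0 -> has_part S (min_part S).
Proof.
case/set0Pn => x0 Sx0; rewrite /min_part; case: pickP => [x Sx|/(_ x0)].
  by case: arg_minnP => // y Sy _; rewrite has_partE.
by rewrite Sx0.
Qed.

Lemma min_part_eq S s : has_part S s -> (forall i, has_part S i -> s <= i) ->
  min_part S = s.
Proof.
move=> Ss s_min; apply/eqP; rewrite eqn_leq min_part_leq //=.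
exact/s_min/has_min_part/(has_part_neq0 Ss).
Qed.

Lemma m_part_geq S i : has_part S i -> i <= m_part S.
Proof.
case/andP=> le_iN Si; rewrite /m_part -[i](@inordK N) //.
exact: (@leq_bigmax_cond _ (mem S) (fun x : 'I_N.+1 => x : nat) _ Si).
Qed.

Lemma has_m_part S : S != set0 -> has_part S (m_part S).
Proof.
rewrite -card_gt0 => /(eq_bigmax_cond (fun x : 'I_N.+1 => x : nat))[y Sy].
by rewrite /m_part => ->; rewrite has_partE.
Qed.

Lemma m_part_eq S m : has_part S m -> (forall i, has_part S i -> i <= m) ->
  m_part S = m.
Proof.
move=> Sm m_max; apply/eqP; rewrite eqn_leq m_part_geq // andbT.
by apply/bigmax_leqP => x Sx; apply: m_max; rewrite has_partE.
Qed.

Lemma N_partU1 (A : T) u : u <= N -> ~~ has_part A u ->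
  N_part (inord u |: A) = u + N_part A.
Proof.
move=> le_uN; rewrite /has_part le_uN /N_part => Au.
by rewrite big_setU1 //= inordK.
Qed.

Lemma N_partD1 (A : T) u : has_part A u -> N_part A = u + N_part (A :\ inord u).
Proof. by case/andP=> le_uN Au; rewrite /N_part (big_setD1 _ Au) /= inordK. Qed.

Lemma card_partU1 (A : T) u : u <= N -> ~~ has_part A u ->
  #|inord u |: A| = #|A|.+1.
Proof. by move=> le_uN; rewrite /has_part le_uN cardsU1 => ->. Qed.

Lemma card_partD1 (A : T) u : has_part A u -> #|A| = #|A :\ inord u|.+1.
Proof. by case/andP=> _ Au; rewrite (cardsD1 (inord u)) Au. Qed.

Lemma card_leq_N_part (S : T) : ord0 \notin S -> #|S| <= N_part S.
Proof.
move=> S0; rewrite -sum1_card /N_part; apply: leq_sum => x Sx.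
by rewrite lt0n; apply: contraNneq S0 => x0; rewrite -(_ : x = ord0) //; apply: val_inj.
Qed.

Definition slope (S : T) : nat := top_run (has_part S) (m_part S).

Definition pentagonal (S : T) : bool :=
  (S == set0) || (min_part S + slope S == (m_part S).+1) &&
                 ((min_part S == slope S) || (min_part S == (slope S).+1)).

(* Adding 1 to the parts m-s+1, ..., m removes m-s+1 and adds m+1. *)
Definition move_base (S : T) : T :=
  inord (m_part S).+1 |: (S :\ inord (min_part S) :\ inord (m_part S - min_part S + 1)).

(* Subtracting 1 from the parts m-k+1, ..., m removes m and adds m-k. *)
Definition move_slope (S : T) : T :=
  inord (slope S) |: (inord (m_part S - slope S) |: S :\ inord (m_part S)).

Definition franklin (S : T) : T :=
  if min_part S <= slope S then move_base S else move_slope S.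

Section NonemptyPartition.
Variable S : T.
Hypotheses (S_valid : is_distinct_partition_of S) (S_neq0 : S != set0).

Lemma part_gt0 i : has_part S i -> 0 < i.
Proof.
case: i => // S0; case/andP: S_valid => /negP[].
by rewrite -has_part0.
Qed.

Lemma slope_gt0 : 0 < slope S.
Proof.
apply: top_run_geq => [|j]; first exact/part_gt0/has_m_part.
by rewrite ltnS leqn0 => /eqP->; rewrite subn0; apply: has_m_part.
Qed.

Lemma min_part_add_slope : min_part S + slope S <= (m_part S).+1.
Proof.
have /min_part_leq : has_part S (m_part S - (slope S).-1).
  by apply: top_run_mem; rewrite -/(slope S) ltn_predL slope_gt0.
by have := top_run_leq (has_part S) (m_part S); rewrite -/(slope S); lia.
Qed.

End NonemptyPartition.

Lemma npentagonal_neq0 (S : T) : ~~ pentagonal S -> S != set0.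
Proof. by rewrite /pentagonal; case: eqP. Qed.

Section MoveBase.
Variable S : T.
Hypotheses (S_valid : is_distinct_partition_of S) (S_npent : ~~ pentagonal S)
           (base_le_slope : min_part S <= slope S).
Let S_neq0 := npentagonal_neq0 S_npent.
Local Notation m := (m_part S).
Local Notation s := (min_part S).
Local Notation k := (slope S).
Local Notation t := (m - s + 1).

Let s_gt0 : 0 < s := part_gt0 S_valid (has_min_part S_neq0).
Let s_add_k := min_part_add_slope S_valid S_neq0.

Lemma double_min_part_leq : 2 * s <= m.
Proof.
apply: contraNT S_npent; rewrite -ltnNge => lt_m2s.
have [e_sk e_s] : s + k = m.+1 /\ s = k by lia.
by rewrite /pentagonal e_sk e_s !eqxx orbT.
Qed.

Lemma has_part_pivot : has_part S t.
Proof.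
have := @top_run_mem (has_part S) m (s - 1); rewrite -/(slope S).
by rewrite (_ : m - (s - 1) = t); [apply; lia | have := double_min_part_leq; lia].
Qed.

Let s_le_N : s <= N := has_part_leq (has_min_part S_neq0).
Let t_le_N : t <= N := has_part_leq has_part_pivot.

Lemma has_part_pivot_base : has_part (S :\ inord s) t.
Proof.
rewrite has_partD1 // has_part_pivot andbT.
by have := double_min_part_leq; lia.
Qed.

Lemma N_part_pivot : N_part S = s + t + N_part (S :\ inord s :\ inord t).
Proof.
by rewrite (N_partD1 (has_min_part S_neq0)) (N_partD1 has_part_pivot_base) addnA.
Qed.

Lemma m_part_ltn : m < N.
Proof.
have := double_min_part_leq; case/andP: S_valid => _ /eqP.
by rewrite N_part_pivot; lia.
Qed.

Lemma has_part_move_base i :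
  has_part (move_base S) i = (i == m.+1) || [&& i != t, i != s & has_part S i].
Proof. by rewrite /move_base has_partU1 ?m_part_ltn // !has_partD1. Qed.

Let R_neq0 : move_base S != set0.
Proof. by apply: (@has_part_neq0 _ m.+1); rewrite has_part_move_base eqxx. Qed.

Lemma m_part_move_base : m_part (move_base S) = m.+1.
Proof.
apply: m_part_eq => [|i]; first by rewrite has_part_move_base eqxx.
by rewrite has_part_move_base => /orP[/eqP-> // | /and3P[_ _ /m_part_geq]]; lia.
Qed.

Lemma slope_move_base : slope (move_base S) = s.
Proof.
have := double_min_part_leq; rewrite /slope m_part_move_base => le_2s_m.
apply/eqP; rewrite eqn_leq; apply/andP; split.
  apply: top_run_leq_gap; rewrite (_ : m.+1 - s = t); last by lia.
  by rewrite has_part_move_base eqxx /=; apply/eqP; lia.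
apply: top_run_geq => [|[|j] lt_js]; first by lia.
  by rewrite subn0 has_part_move_base eqxx.
rewrite subSS has_part_move_base; apply/orP; right.
apply/and3P; split; [apply/eqP; lia | apply/eqP; lia |].
by apply: top_run_mem; rewrite -/(slope S); lia.
Qed.

Lemma min_part_move_base : s < min_part (move_base S).
Proof.
have := has_min_part R_neq0; rewrite has_part_move_base.
case/orP => [/eqP-> | /and3P[_ ne_s /min_part_leq]]; first by lia.
by rewrite ltn_neqAle eq_sym ne_s.
Qed.

Let no_succ_m_part : ~~ has_part (S :\ inord s :\ inord t) m.+1.
Proof. by rewrite !has_partD1 //; apply/negP => /and3P[_ _ /m_part_geq]; lia. Qed.

Lemma move_base_valid : is_distinct_partition_of (move_base S).
Proof.
apply/andP; split.
  rewrite -has_part0 has_part_move_base negb_or /=.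
  by apply/negP => /and3P[_ _ /(part_gt0 S_valid)].
case/andP: S_valid => _; rewrite /move_base N_partU1 ?m_part_ltn // N_part_pivot.
by move/eqP; lia.
Qed.

Lemma move_base_npent : ~~ pentagonal (move_base S).
Proof.
rewrite /pentagonal (negbTE R_neq0) slope_move_base m_part_move_base /=.
by have := min_part_move_base; have := double_min_part_leq; lia.
Qed.

Lemma franklin_move_base : franklin (move_base S) = S.
Proof.
rewrite /franklin slope_move_base leqNgt min_part_move_base /=.
rewrite /move_slope slope_move_base m_part_move_base.
have m_lt_N := m_part_ltn; apply: has_part_inj => i.
rewrite has_partU1 // has_partU1 ?has_partD1 ?has_part_move_base; try lia.
rewrite (_ : m.+1 - s = t); last by lia.
case: (eqVneq i s) => [->|_]; first by rewrite has_min_part.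
case: (eqVneq i t) => [->|_]; first by rewrite has_part_pivot.
case: (eqVneq i m.+1) => [->|] //=.
by apply/esym/negP => /m_part_geq; lia.
Qed.

Lemma card_move_base : #|S| = #|move_base S|.+1.
Proof.
rewrite /move_base card_partU1 ?m_part_ltn //.
by rewrite (card_partD1 (has_min_part S_neq0)) (card_partD1 has_part_pivot_base).
Qed.

End MoveBase.

Section MoveSlope.
Variable S : T.
Hypotheses (S_valid : is_distinct_partition_of S) (S_npent : ~~ pentagonal S)
           (slope_lt_base : slope S < min_part S).
Let S_neq0 := npentagonal_neq0 S_npent.
Local Notation m := (m_part S).
Local Notation s := (min_part S).
Local Notation k := (slope S).
Local Notation u := (m - k).

Let k_gt0 : 0 < k := slope_gt0 S_valid S_neq0.
Let s_add_k := min_part_add_slope S_valid S_neq0.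
Let m_le_N : m <= N := has_part_leq (has_m_part S_neq0).

Lemma has_part_slope_gap : ~~ has_part S u.
Proof. by apply: top_run_gap; rewrite -/(slope S); lia. Qed.

Lemma double_slope_ltn : 2 * k < m.
Proof.
have ne_skm : s + k != m.
  apply: contraNneq has_part_slope_gap => e_skm.
  by rewrite (_ : u = s); [apply: has_min_part | lia].
have : (s + k == m.+1) ==> (s != k.+1).
  apply/implyP => e_skm; apply: contraNneq S_npent => e_s.
  by rewrite /pentagonal e_skm e_s eqxx !orbT.
by lia.
Qed.

Lemma has_part_move_slope i :
  has_part (move_slope S) i = [|| i == k, i == u | (i != m) && has_part S i].
Proof. by rewrite /move_slope !has_partU1 ?has_partD1 //; lia. Qed.

Let R_neq0 : move_slope S != set0.
Proof. by apply: (@has_part_neq0 _ k); rewrite has_part_move_slope eqxx. Qed.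

Lemma m_part_move_slope : m_part (move_slope S) = m.-1.
Proof.
have lt_2k_m := double_slope_ltn; apply: m_part_eq => [|i].
  rewrite has_part_move_slope; case: (eqVneq k 1) => [->|ne_k1].
    by rewrite subn1 eqxx orbT.
  apply/or3P; apply: Or33; apply/andP; split; first by apply/eqP; lia.
  by rewrite -subn1; apply: top_run_mem; rewrite -/(slope S); lia.
rewrite has_part_move_slope.
by case/or3P => [/eqP-> | /eqP-> | /andP[/eqP ne_im /m_part_geq]]; lia.
Qed.

Lemma min_part_move_slope : min_part (move_slope S) = k.
Proof.
have lt_2k_m := double_slope_ltn; apply: min_part_eq => [|i].
  by rewrite has_part_move_slope eqxx.
rewrite has_part_move_slope => /or3P[/eqP-> | /eqP-> | /andP[_ /min_part_leq]]; lia.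
Qed.

Lemma slope_move_slope_geq : k <= slope (move_slope S).
Proof.
have lt_2k_m := double_slope_ltn; rewrite [slope (move_slope S)]/slope m_part_move_slope.
apply: top_run_geq => [|j lt_jk]; first by lia.
rewrite has_part_move_slope; case: (eqVneq j.+1 k) => [<-|ne_jk].
  by apply/or3P; apply: Or32; apply/eqP; lia.
apply/or3P; apply: Or33; apply/andP; split; first by apply/eqP; lia.
rewrite (_ : m.-1 - j = m - j.+1); last by lia.
by apply: top_run_mem; rewrite -/(slope S); lia.
Qed.

Let no_slope_part : ~~ has_part (inord u |: S :\ inord m) k.
Proof.
rewrite has_partU1 ?has_partD1; try lia.
have := double_slope_ltn; rewrite negb_or negb_and negbK => lt_2k_m.
apply/andP; split; first by apply/eqP; lia.
by apply/orP; right; apply/negP => /min_part_leq; lia.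
Qed.

Let no_gap_part : ~~ has_part (S :\ inord m) u.
Proof. by rewrite has_partD1 // negb_and has_part_slope_gap orbT. Qed.

Lemma move_slope_valid : is_distinct_partition_of (move_slope S).
Proof.
have lt_2k_m := double_slope_ltn.
apply/andP; split.
  rewrite -has_part0 has_part_move_slope negb_or negb_or.
  apply/and3P; split; [apply/eqP; lia | apply/eqP; lia |].
  by apply/negP => /andP[_ /(part_gt0 S_valid)].
case/andP: S_valid => _; rewrite (N_partD1 (has_m_part S_neq0)) /move_slope.
by rewrite N_partU1 ?N_partU1 //; try lia; move/eqP; lia.
Qed.

Lemma move_slope_npent : ~~ pentagonal (move_slope S).
Proof.
rewrite /pentagonal (negbTE R_neq0) min_part_move_slope m_part_move_slope /=.
by have := slope_move_slope_geq; have := double_slope_ltn; lia.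
Qed.

Lemma franklin_move_slope : franklin (move_slope S) = S.
Proof.
have lt_2k_m := double_slope_ltn.
rewrite /franklin min_part_move_slope slope_move_slope_geq /move_base.
rewrite min_part_move_slope m_part_move_slope (_ : m.-1.+1 = m); last by lia.
rewrite (_ : m.-1 - k + 1 = u); last by lia.
apply: has_part_inj => i; rewrite has_partU1 // !has_partD1; try lia.
rewrite has_part_move_slope.
case: (eqVneq i m) => [->|_]; first by rewrite has_m_part.
case: (eqVneq i u) => [->|_]; first by rewrite (negbTE has_part_slope_gap).
case: (eqVneq i k) => [->|//]; apply/esym/negP => /min_part_leq; lia.
Qed.

Lemma card_move_slope : #|move_slope S| = #|S|.+1.
Proof.
rewrite /move_slope card_partU1 ?card_partU1 ?(card_partD1 (has_m_part S_neq0)) //.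
all: lia.
Qed.

End MoveSlope.

Lemma franklin_sign_reversing (S : T) :
  is_distinct_partition_of S -> ~~ pentagonal S ->
  [/\ is_distinct_partition_of (franklin S), ~~ pentagonal (franklin S),
      franklin (franklin S) = S,
      m_part (franklin S) + #|franklin S| = m_part S + #|S|
    & ((-1) ^+ #|franklin S| = - (-1) ^+ #|S| :> int)%R].
Proof.
move=> S_valid S_npent; have [s_le_k | k_lt_s] := leqP (min_part S) (slope S).
  rewrite [franklin S]/franklin s_le_k franklin_move_base // m_part_move_base //.
  rewrite (card_move_base S_valid S_npent s_le_k) exprS mulN1r opprK addSnnS.
  by split; [apply: move_base_valid | apply: move_base_npent | | |].
rewrite [franklin S]/franklin leqNgt k_lt_s franklin_move_slope // m_part_move_slope //.
rewrite card_move_slope // exprS mulN1r.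
split; [apply: move_slope_valid | apply: move_slope_npent | | |] => //.
have := double_slope_ltn S_valid S_npent k_lt_s; lia.
Qed.

Definition iota_set (s k : nat) : T := [set x : 'I_N.+1 | s <= x < s + k].

Lemma has_part_iota_set s k i :
  s + k <= N.+1 -> has_part (iota_set s k) i = (s <= i < s + k).
Proof.
move=> le_skN; rewrite /has_part inE.
case: (leqP i N) => [le_iN | lt_Ni] /=; first by rewrite inordK.
by apply/esym/negP => /andP[_]; lia.
Qed.

Lemma iota_set0 s : iota_set s 0 = set0.
Proof. by apply/setP => x; rewrite !inE addn0 leqNgt andNb. Qed.

Lemma iota_setS s k : s + k <= N -> iota_set s k.+1 = inord (s + k) |: iota_set s k.
Proof.
move=> le_skN; apply: has_part_inj => i.
by rewrite has_partU1 // !has_part_iota_set //; lia.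
Qed.

Lemma card_N_part_iota_set s k : s + k <= N.+1 ->
  #|iota_set s k| = k /\ 2 * N_part (iota_set s k) + k = k * (2 * s + k).
Proof.
elim: k => [|k IH] le_skN; first by rewrite iota_set0 cards0 /N_part big_set0.
have sk_out : ~~ has_part (iota_set s k) (s + k).
  by rewrite has_part_iota_set ?ltnn ?andbF //; lia.
have /IH[card_k N_part_k] : s + k <= N.+1 by lia.
by rewrite iota_setS ?card_partU1 ?N_partU1 ?card_k //; lia.
Qed.

Section IotaSetParts.
Variables s k : nat.
Hypotheses (s_gt0 : 0 < s) (k_gt0 : 0 < k) (iota_leq_N : s + k <= N.+1).

Lemma min_part_iota_set : min_part (iota_set s k) = s.
Proof. by apply: min_part_eq => [|i]; rewrite has_part_iota_set //; lia. Qed.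

Lemma m_part_iota_set : m_part (iota_set s k) = s + k - 1.
Proof. by apply: m_part_eq => [|i]; rewrite has_part_iota_set //; lia. Qed.

Lemma slope_iota_set : slope (iota_set s k) = k.
Proof.
rewrite /slope m_part_iota_set; apply/eqP; rewrite eqn_leq; apply/andP; split.
  by apply: top_run_leq_gap; rewrite has_part_iota_set //; lia.
by apply: top_run_geq => [|j lt_jk]; rewrite ?has_part_iota_set //; lia.
Qed.

Lemma pentagonal_iota_set : pentagonal (iota_set s k) = (s == k) || (s == k.+1).
Proof.
have : has_part (iota_set s k) s by rewrite has_part_iota_set //; lia.
move/has_part_neq0/negbTE; rewrite /pentagonal => ->.
rewrite min_part_iota_set slope_iota_set m_part_iota_set.
by rewrite (_ : (s + k - 1).+1 = s + k) ?eqxx //; lia.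
Qed.

End IotaSetParts.

Lemma pentagonal_iota (S : T) : is_distinct_partition_of S -> pentagonal S ->
  S != set0 -> S = iota_set (min_part S) (slope S).
Proof.
move=> S_valid; rewrite /pentagonal => /orP[/eqP-> | /andP[/eqP e_skm _]].
  by rewrite eqxx.
move=> S_neq0; have m_le_N := has_part_leq (has_m_part S_neq0).
apply: has_part_inj => i; rewrite has_part_iota_set; last by lia.
apply/idP/idP => [Si | /andP[le_si lt_i_sk]].
  by have := m_part_geq Si; have := min_part_leq Si; lia.
rewrite (_ : i = m_part S - (m_part S - i)); last by lia.
by apply: top_run_mem; rewrite -/(slope S); lia.
Qed.

Lemma iota_set_partition s k : 0 < s -> 0 < k -> 2 * N + k = k * (2 * s + k) ->
  [/\ is_distinct_partition_of (iota_set s k),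
      m_part (iota_set s k) + #|iota_set s k| = s + 2 * k - 1,
      iota_set s k != set0 & #|iota_set s k| = k].
Proof.
move=> s_gt0 k_gt0 N_sk; have iota_le_N : s + k <= N.+1 by nia.
have [card_k N_part_k] := card_N_part_iota_set iota_le_N.
rewrite m_part_iota_set // card_k -card_gt0 card_k; split=> //; last by lia.
apply/andP; split; last by apply/eqP; lia.
by rewrite -has_part0 has_part_iota_set //; lia.
Qed.

Lemma pentagonal_cardE (S : T) a r : 0 < r ->
  [&& is_distinct_partition_of S, m_part S + #|S| == a, pentagonal S,
      S != set0 & #|S| == r]
  = (S == iota_set r r) && ((a == 3 * r - 1) && (2 * N == r * (3 * r - 1)))
    || (S == iota_set r.+1 r) && ((a == 3 * r) && (2 * N == r * (3 * r + 1))).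
Proof.
move=> r_gt0; apply/and5P/idP => [[S_valid /eqP stat_a S_pent S_neq0 /eqP card_r] | ].
  have S_iota := pentagonal_iota S_valid S_pent S_neq0.
  have s_gt0 := part_gt0 S_valid (has_min_part S_neq0).
  have m_le_N := has_part_leq (has_m_part S_neq0).
  move: S_pent; rewrite /pentagonal (negbTE S_neq0) /= => /andP[/eqP e_skm s_k].
  set s := min_part S in S_iota e_skm s_k s_gt0.
  set k := slope S in S_iota e_skm s_k.
  have iota_le_N : s + k <= N.+1 by lia.
  have [card_k N_part_k] := card_N_part_iota_set iota_le_N.
  rewrite -S_iota card_r in card_k N_part_k.
  rewrite -card_k in S_iota s_k N_part_k e_skm; rewrite S_iota.
  case/andP: S_valid => _ /eqP N_S.
  by case/orP: s_k => /eqP e_s; rewrite e_s eqxx /=; apply/orP; [left | right];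
     apply/andP; split; apply/eqP; nia.
case/orP => /andP[/eqP-> /andP[/eqP-> /eqP N_r]].
  have N_rr : 2 * N + r = r * (2 * r + r) by nia.
  have le_rrN : r + r <= N.+1 by nia.
  have [? -> ? ->] := iota_set_partition r_gt0 r_gt0 N_rr.
  by rewrite pentagonal_iota_set ?eqxx //; split=> //; apply/eqP; lia.
have N_rr : 2 * N + r = r * (2 * r.+1 + r) by nia.
have le_rrN : r.+1 + r <= N.+1 by nia.
have [? -> ? ->] := iota_set_partition (ltn0Sn r) r_gt0 N_rr.
by rewrite pentagonal_iota_set ?eqxx ?orbT //; split=> //; apply/eqP; lia.
Qed.
End Parts.

Lemma odd_mul_3_sub1 r : odd (r * (3 * r - 1)) = false.
Proof.
case: r => [|r] //; rewrite (_ : 3 * r.+1 - 1 = (3 * r).+2); last by lia.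
by rewrite oddM !oddS oddM /=; case: (odd r).
Qed.

Lemma odd_mul_3_add1 r : odd (r * (3 * r + 1)) = false.
Proof. by rewrite oddM addn1 oddS oddM /=; case: (odd r). Qed.

Lemma eqn_half n x : ~~ odd x -> (n == x %/ 2) = (2 * n == x).
Proof.
move=> even_x; have := odd_double_half x; rewrite (negbTE even_x) divn2.
by move=> <-; lia.
Qed.

Local Open Scope ring_scope.

Lemma sum_nat_pred1 (V : nmodType) m n k (F : nat -> V) :
  (m <= k < n)%N -> \sum_(m <= i < n | i == k) F i = F k.
Proof.
move=> k_in; rewrite -big_filter filter_pred1_uniq ?big_seq1 //.
  exact: iota_uniq.
by rewrite mem_index_iota.
Qed.

Lemma sum_pred2_cond (V : nmodType) (I : finType) (x1 x2 : I) (c1 c2 : bool)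
    (F : I -> V) :
  (c1 -> c2 -> x1 != x2) ->
  \sum_(i | (i == x1) && c1 || (i == x2) && c2) F i = F x1 *+ c1 + F x2 *+ c2.
Proof.
case: c1 c2 => [] [] /= ne12; rewrite ?mulr1n ?mulr0n ?addr0 ?add0r.
- rewrite (bigD1 x1) ?eqxx //= (big_pred1 x2) // => i /=.
  rewrite !andbT; case: (eqVneq i x1) => [->|] /=; last by rewrite andbT.
  by rewrite (negbTE (ne12 isT isT)).
- by rewrite (big_pred1 x1) // => i; rewrite andbT andbF orbF.
- by rewrite (big_pred1 x2) // => i; rewrite andbT andbF.
- by rewrite big_pred0 // => i; rewrite !andbF.
Qed.

Lemma lhs_coef_pentagonal a N : lhs_coef a N =
  \sum_(S : {set 'I_N.+1} | is_distinct_partition_of S &&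
                           (m_part S + n_part S == a)%N && pentagonal S)
     (-1) ^+ n_part S.
Proof.
rewrite /lhs_coef (bigID (@pentagonal N)) /=.
rewrite [X in _ + X](@sumr_sign_reversing _ _ _ (@franklin N)) ?addr0 //.
move=> S /andP[/andP[S_valid /eqP stat_a] S_npent].
have [R_valid R_npent RK stat_R sign_R] := franklin_sign_reversing S_valid S_npent.
by split=> //; rewrite R_valid R_npent /n_part stat_R stat_a eqxx.
Qed.

Lemma pentagonal_sum_by_card a N :
  \sum_(S : {set 'I_N.+1} | is_distinct_partition_of S &&
                           (m_part S + n_part S == a)%N && pentagonal S)
     ((-1) ^+ n_part S : int)
  = ((a == 0)%N && (N == 0)%N)%:R +
    \sum_(1 <= r < N.+1)
      \sum_(S : {set 'I_N.+1} | [&& is_distinct_partition_of S,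
               (m_part S + #|S| == a)%N, pentagonal S, S != set0 & #|S| == r])
         (-1) ^+ r.
Proof.
rewrite (bigID (pred1 set0)) /=; congr (_ + _).
  rewrite (eq_bigl (fun S => (S == set0) && ((a == 0)%N && (N == 0)%N))) => [|S].
    case: (_ && _); last by rewrite big_pred0 // => S; rewrite andbF.
    by rewrite (big_pred1 set0) => [|S]; rewrite ?andbT // /n_part cards0.
  case: (eqVneq S set0) => [->|_]; last by rewrite andbF.
  rewrite /is_distinct_partition_of /pentagonal /N_part /m_part /n_part !big_set0.
  by rewrite in_set0 cards0 eqxx /= !andbT andbC !(eq_sym 0%N).
rewrite /n_part; transitivity (\sum_(S : {set 'I_N.+1} | is_distinct_partition_of S &&
    (m_part S + #|S| == a)%N && pentagonal S && (S != set0))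
    \sum_(1 <= r < N.+1 | r == #|S|) ((-1) ^+ r : int)).
  apply: eq_bigr => S /andP[/andP[/andP[/andP[S0 /eqP N_S] _] _] S_neq0].
  rewrite sum_nat_pred1 // card_gt0 S_neq0 /= ltnS.
  by have := card_leq_N_part S0; rewrite N_S.
rewrite (exchange_big_dep (fun _ => true)) //=; apply: eq_bigr => r _.
by apply: eq_bigl => S; rewrite -!andbA [r == _]eq_sym.
Qed.

Theorem mainTheorem5 : forall a N : nat, lhs_coef a N = rhs_coef a N.
Proof.
move=> a N; rewrite lhs_coef_pentagonal pentagonal_sum_by_card /rhs_coef.
congr (_ + _); apply: eq_big_nat => r /andP[r_gt0 _].
rewrite (eq_bigl (fun S =>
    (S == iota_set N r r) && ((a == 3 * r - 1) && (2 * N == r * (3 * r - 1)))%N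
    || (S == iota_set N r.+1 r) && ((a == 3 * r) && (2 * N == r * (3 * r + 1)))%N))
  => [|S]; last exact: pentagonal_cardE.
rewrite sum_pred2_cond.
  rewrite (eqn_half N (negbT (odd_mul_3_sub1 r))).
  by rewrite (eqn_half N (negbT (odd_mul_3_add1 r))) mulrDr !mulr_natr.
move=> /andP[_ /eqP N_sub] /andP[_ /eqP N_add]; move: N_add; rewrite N_sub.
by move/eqP; rewrite eqn_pmul2l //; lia.
Qed.
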